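(* Let $a,b\in\mathbb{R}$ with $b\neq0$ and $|a|<1$, let $g\in L^\infty(\mathbb{R})$, and let $f\in L^\infty(\mathbb{R})$ be the solution of $f(x)-af(bx)=g(x)$ (i.e. $M_{a,b}f=g$, where $(M_{a,b}f)(x)=f(x)-af(bx)$). Then: (1) if $b>0$, then $f\in C([0,\infty))$ if and only if $g\in C([0,\infty))$; (2) if $b\ge1$, then $f\in C([1,\infty))$ if and only if $g\in C([1,\infty))$; (3) if $0<b\le1$, then $f\in C([0,1])$ if and only if $g\in C([0,1])$.
   Context: For $X\subseteq\mathbb{R}$, $C(X)$ is the space of bounded uniformly continuous real-valued functions on $X$; a function in $L^\infty(\mathbb{R})$ is said to lie in $C(X)$ if its restriction to $X$ agrees almost everywhere with an element of $C(X)$. *)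

From HB Require Import structures.
From mathcomp Require Import all_boot all_order all_algebra.
From mathcomp Require Import all_classical all_reals all_analysis.
Set Implicit Arguments. Unset Strict Implicit. Unset Printing Implicit Defensive.
Import Order.TTheory GRing.Theory Num.Theory.
Import numFieldNormedType.Exports.
Local Open Scope classical_set_scope.
Local Open Scope ring_scope.

Definition Linfty (R : realType) (f : R -> R) : Prop :=
  measurable_fun [set: R] f /\
  exists M : R, {ae (@lebesgue_measure R), forall x, `|f x| <= M}.

(* h is a bounded uniformly continuous real function on X (h in C(X)). *)
Definition BUC_on (R : realType) (X : set R) (h : R -> R) : Prop :=
  (exists M : R, forall x, X x -> `|h x| <= M) /\
  (forall e : R, 0 < e -> exists2 d : R, 0 < d &
     forall x y, X x -> X y -> `|x - y| < d -> `|h x - h y| < e).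

(* An L^oo function f "lies in C(X)": its restriction to X agrees a.e.
   with some element of C(X). *)
Definition in_C (R : realType) (X : set R) (f : R -> R) : Prop :=
  exists h : R -> R, BUC_on X h /\
    {ae (@lebesgue_measure R), forall x, X x -> f x = h x}.

Definition Mab (R : realType) (a b : R) (f : R -> R) : R -> R :=
  fun x => f x - a * f (b * x).

From HB Require Import structures.
From mathcomp Require Import all_boot all_order all_algebra.
From mathcomp Require Import all_classical all_reals all_analysis.
From mathcomp Require Import lra.
Import Order.TTheory GRing.Theory Num.Theory.
Import numFieldNormedType.Exports.
Local Open Scope classical_set_scope.
Local Open Scope ring_scope.

(* M_{a,b} is inverted by the Neumann series f = sum_k a^k g(b^k .), which
   converges uniformly on every set X with b X `<=` X on which g is bounded,
   because |a| < 1.  Hence both M_{a,b} and its inverse preserve bounded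
   uniform continuity on such X, the inverse as a uniform limit of finite sums
   of dilates of g.  Almost-everywhere identities survive the substitutions
   x -> b^k x since dilations preserve Lebesgue-null sets.  The three cases
   are the sets [0,oo), [1,oo) and [0,1], each mapped into itself by x -> b x
   under its hypothesis on b. *)

Set Implicit Arguments.
Unset Strict Implicit.

Section lebesgue_dilation.
Context {R : realType}.
Local Notation mu := (@lebesgue_measure R).

Lemma lebesgue_measure_dilate (c : R) (A : set R) : 0 < c -> measurable A ->
  mu A = (c%:E * mu ((fun x => c * x)%R @^-1` A))%E.
Proof.
move=> c0 mA.
apply: (@lebesgue_measure_unique R (mscale (NngNum (ltW c0))
  (pushforward mu ( *%R c : R -> measurableTypeR R)))) => // _ [[u v] _ <-].
change (mu `]u, v] = c%:E * mu ( *%R c @^-1` `]u, v]))%E.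
rewrite (_ : _ @^-1` _ = `]u / c, v / c]%classic); last first.
  apply/seteqP; split => x /=;
  by rewrite !in_itv /= ltr_pdivrMr // ler_pdivlMr // ![x * c]mulrC.
rewrite !lebesgue_measure_itv /= !lte_fin ltr_pM2r ?invr_gt0 //.
case: ifP => _; last by rewrite mule0.
by rewrite -EFinD -EFinM mulrBr !mulrA !(mulrC c) !mulfK ?gt_eqF.
Qed.

Lemma ae_dilate (c : R) (P : R -> Prop) : 0 < c ->
  {ae mu, forall x, P x} -> {ae mu, forall x, P (c * x)}.
Proof.
move=> c0 [N [mN N0 PN]].
have mcN : measurable ((fun x => c * x) @^-1` N).
  by rewrite -[_ @^-1` _]setTI; apply: measurable_realfun.mulrl_measurable.
exists ((fun x => c * x) @^-1` N); split => //; last by move=> x /= /PN.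
apply/eqP; move: N0; rewrite (lebesgue_measure_dilate c0 mN) => /eqP.
by rewrite mule_eq0 eqe gt_eqF.
Qed.

End lebesgue_dilation.

Section tail_bound.
Context {R : realType}.
Variables (u eps : R ^nat).
Hypothesis eps_cvg0 : eps @ \oo --> 0.

Lemma cvg_dist_le (l : R) : (forall n, `|l - u n| <= eps n) -> u @ \oo --> l.
Proof.
move=> ul; apply/cvgrPdist_lt => e e0.
near=> n; apply: le_lt_trans (ul n) (le_lt_trans (ler_norm _) _).
by near: n; exact: cvgr0_norm_lt.
Unshelve. all: by end_near.
Qed.

Hypothesis tail_le : forall n m, (n <= m)%N -> `|u m - u n| <= eps n.

Lemma tail_le_cvg : cvgn u.
Proof.
apply/cauchy_cvgP/cauchy_exP => e e0.
have [N _ /(_ N (leqnn N)) epsN] := cvgr0_norm_lt _ eps_cvg0 _ e0.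
exists (u N); exists N => // m /= Nm; rewrite -ball_normE /= distrC.
exact: le_lt_trans (tail_le Nm) (le_lt_trans (ler_norm _) epsN).
Qed.

Lemma tail_le_lim n : `|limn u - u n| <= eps n.
Proof.
have : `|u m - u n| @[m --> \oo] --> `|limn u - u n|.
  by apply: cvg_norm; apply: cvgB tail_le_cvg (cvg_cst _).
move/cvgr_to_le; apply; near=> m; apply: tail_le; near: m.
exact: nbhs_infty_ge.
Unshelve. all: by end_near. Qed.

End tail_bound.

Section unif_cont_on.
Context {R : realType}.
Variable X : set R.

Definition unif_cont_on (h : R -> R) : Prop :=
  forall e : R, 0 < e -> exists2 d : R, 0 < d &
  forall x y, X x -> X y -> `|x - y| < d -> `|h x - h y| < e.

Lemma unif_cont_on_cst (k : R) : unif_cont_on (fun=> k).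
Proof. by move=> e e0; exists 1 => // x y _ _ _; rewrite subrr normr0. Qed.

Lemma unif_cont_onN h : unif_cont_on h -> unif_cont_on (fun x => - h x).
Proof.
move=> uh e /uh[d d0 hd]; exists d => // x y Xx Xy xy.
by rewrite -opprD normrN hd.
Qed.

Lemma unif_cont_onD h1 h2 : unif_cont_on h1 -> unif_cont_on h2 ->
  unif_cont_on (fun x => h1 x + h2 x).
Proof.
move=> uh1 uh2 e e0; have e20 : 0 < e / 2 by rewrite divr_gt0.
have [d1 d10 hd1] := uh1 _ e20.
have [d2 d20 hd2] := uh2 _ e20.
exists (Num.min d1 d2) => [|x y Xx Xy]; first by rewrite lt_min d10.
rewrite lt_min => /andP[xy1 xy2]; rewrite opprD addrACA (splitr e).
exact: le_lt_trans (ler_normD _ _) (ltrD (hd1 _ _ Xx Xy xy1) (hd2 _ _ Xx Xy xy2)).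
Qed.

Lemma unif_cont_onZ (k : R) h : unif_cont_on h -> unif_cont_on (fun x => k * h x).
Proof.
move=> uh e e0; have k1 : 0 < `|k| + 1 by rewrite ltr_wpDl.
have [d d0 hd] := uh _ (divr_gt0 e0 k1).
exists d => // x y Xx Xy /(hd _ _ Xx Xy) hxy.
rewrite -mulrBr normrM; apply: le_lt_trans (_ : (`|k| + 1) * `|h x - h y| < e).
  by rewrite ler_wpM2r // lerDl.
by rewrite mulrC -ltr_pdivlMr.
Qed.

Lemma unif_cont_on_dilate (c : R) h : 0 < c -> (forall x, X x -> X (c * x)) ->
  unif_cont_on h -> unif_cont_on (fun x => h (c * x)).
Proof.
move=> c0 Xc uh e /uh[d d0 hd]; exists (d / c) => [|x y Xx Xy xy].
  by rewrite divr_gt0.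
apply: hd; [exact: Xc | exact: Xc |].
by rewrite -mulrBr normrM gtr0_norm // mulrC -ltr_pdivlMr.
Qed.

Lemma unif_cont_on_unif_approx h :
  (forall e, 0 < e ->
     exists2 k, unif_cont_on k & forall x, X x -> `|h x - k x| <= e) ->
  unif_cont_on h.
Proof.
move=> happrox e e0; have e30 : 0 < e / 3 by rewrite divr_gt0.
have [k /(_ _ e30)[d d0 kd] hk] := happrox _ e30.
exists d => // x y Xx Xy xy.
rewrite (_ : h x - h y = (h x - k x) + (k x - k y) - (h y - k y)); last first.
  by rewrite addrA subrK opprB addrA subrK.
apply: le_lt_trans (ler_normB _ _) _.
apply: le_lt_trans (lerD (ler_normD _ _) (lexx _)) _.
have := hk x Xx; have := hk y Xy; have := kd x y Xx Xy xy; lra.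
Qed.

End unif_cont_on.

Lemma geometric_tail_le {R : realType} (q : R) (n m : nat) : 0 <= q < 1 ->
  \sum_(n <= k < m) q ^+ k <= q ^+ n / (1 - q).
Proof.
move=> /andP[q0 q1]; have q10 : 0 < 1 - q by rewrite subr_gt0.
have [nm|/ltnW mn] := leqP n m; last first.
  by rewrite big_geq // divr_ge0 ?exprn_ge0 // ltW.
rewrite -(subnKC nm) geometric_partial_tail geometric_seriesE ?lt_eqF //=.
by rewrite ler_pM2r ?invr_gt0 // ler_piMr ?exprn_ge0 // gerBl exprn_ge0.
Qed.

Section neumann_series.
Context {R : realType}.
Local Notation mu := (@lebesgue_measure R).
Variables (X : set R) (a b : R).
Hypotheses (a1 : `|a| < 1) (b0 : 0 < b) (Xb : forall x, X x -> X (b * x)).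

(* The library's hint for a.e. filters does not fire for [lebesgue_measure]. *)
#[local] Instance ae_lebesgue_filter : Filter (nbhs (almost_everywhere mu)) :=
  ae_filter_ringOfSetsType mu.

Definition neumann_partial (h : R -> R) (x : R) : R ^nat :=
  series (fun k => a ^+ k * h (b ^+ k * x)).

Definition neumann (h : R -> R) (x : R) : R := limn (neumann_partial h x).

Lemma dilate_expX n x : X x -> X (b ^+ n * x).
Proof.
elim: n => [|n IH] Xx; first by rewrite expr0 mul1r.
by rewrite exprS -mulrA; apply/Xb/IH.
Qed.

Lemma neumann_partial0 h x : neumann_partial h x 0 = 0.
Proof. exact: big_geq. Qed.

Lemma neumann_partialS h x n :
  neumann_partial h x n.+1 = neumann_partial h x n + a ^+ n * h (b ^+ n * x).
Proof. exact: seriesSr. Qed.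

Lemma neumann_partial_unif_cont h n :
  unif_cont_on X h -> unif_cont_on X (neumann_partial h ^~ n).
Proof.
move=> uh; elim: n => [|n IH].
  rewrite (_ : neumann_partial h ^~ 0 = fun=> 0); last first.
    by apply/funext => x; exact: neumann_partial0.
  exact: unif_cont_on_cst.
rewrite (_ : neumann_partial h ^~ n.+1 =
  fun x => neumann_partial h x n + a ^+ n * h (b ^+ n * x)); last first.
  by apply/funext => x; exact: neumann_partialS.
apply: unif_cont_onD IH (unif_cont_onZ _ (unif_cont_on_dilate _ _ uh)).
  exact: exprn_gt0.
exact: dilate_expX.
Qed.

Lemma Mab_unfold f g : {ae mu, forall x, Mab a b f x = g x} ->
  forall n, {ae mu, forall x, f x = neumann_partial g x n + a ^+ n * f (b ^+ n * x)}.
Proof.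
move=> fg; elim=> [|n IH].
  by apply: nearW => x; rewrite neumann_partial0 add0r !expr0 !mul1r.
apply: filterS2 IH (ae_dilate (exprn_gt0 n b0) fg) => x -> gx.
rewrite neumann_partialS -gx /Mab -addrA mulrBr (mulrA (a ^+ n)) -exprSr.
by rewrite (mulrA b) -exprS subrK.
Qed.

Section bounded.
Variables (h : R -> R) (M : R).
Hypothesis hM : forall x, X x -> `|h x| <= M.

Let C := M / (1 - `|a|).

Lemma neumann_partial_tail_le x : X x -> forall n m, (n <= m)%N ->
  `|neumann_partial h x m - neumann_partial h x n| <= C * `|a| ^+ n.
Proof.
move=> Xx n m nm; rewrite sub_series_geq //.
apply: le_trans (ler_norm_sum _ _ _) _.
apply: le_trans (_ : \sum_(n <= k < m) `|a| ^+ k * M <= _).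
  apply: ler_sum => k _; rewrite normrM normrX ler_wpM2l ?exprn_ge0 //.
  exact/hM/dilate_expX.
rewrite -mulr_suml mulrC /C mulrAC -mulrA ler_wpM2l ?geometric_tail_le ?normr_ge0 //.
exact: le_trans (hM Xx).
Qed.

Let geometric_cvg0 : geometric C `|a| @ \oo --> 0.
Proof. by apply: cvg_geometric; rewrite normr_id. Qed.

Lemma neumann_dist x n : X x ->
  `|neumann h x - neumann_partial h x n| <= C * `|a| ^+ n.
Proof.
by move=> Xx; apply: (tail_le_lim geometric_cvg0); exact: neumann_partial_tail_le.
Qed.

Lemma BUC_on_neumann : unif_cont_on X h -> BUC_on X (neumann h).
Proof.
move=> uh; split.
  exists C => x Xx; have := neumann_dist 0 Xx.
  by rewrite neumann_partial0 subr0 expr0 mulr1.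
apply: unif_cont_on_unif_approx => e e0.
have [n _ /(_ n (leqnn n)) Cn] := cvgr0_norm_lt _ geometric_cvg0 _ e0.
exists (neumann_partial h ^~ n); first exact: neumann_partial_unif_cont.
move=> x Xx; apply: le_trans (neumann_dist n Xx) _.
exact: ltW (le_lt_trans (ler_norm _) Cn).
Qed.

End bounded.

Lemma neumann_ae_eq h f g : (exists Mf, {ae mu, forall x, `|f x| <= Mf}) ->
  {ae mu, forall x, Mab a b f x = g x} -> {ae mu, forall x, X x -> g x = h x} ->
  {ae mu, forall x, X x -> f x = neumann h x}.
Proof.
move=> [Mf fMf] fg gh.
have := ae_foralln (fun n => ae_dilate (exprn_gt0 n b0) gh).
have := ae_foralln (fun n => ae_dilate (exprn_gt0 n b0) fMf).
apply: filterS3 (ae_foralln (Mab_unfold fg)) => x unf fMx ghx Xx.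
have Sgh n : neumann_partial g x n = neumann_partial h x n.
  by apply: eq_bigr => k _; rewrite ghx //; exact: dilate_expX.
apply/esym/cvg_lim => //; apply: (@cvg_dist_le _ _ (geometric Mf `|a|)).
  by apply: cvg_geometric; rewrite normr_id.
move=> n; rewrite /= {1}(unf n) Sgh addrAC subrr add0r normrM normrX mulrC.
by rewrite ler_wpM2r ?exprn_ge0.
Qed.

Lemma BUC_on_Mab h : BUC_on X h -> BUC_on X (Mab a b h).
Proof.
move=> [[M hM] uh]; split.
  exists (M + `|a| * M) => x Xx; apply: le_trans (ler_normB _ _) _.
  by rewrite normrM lerD ?ler_wpM2l ?hM //; exact: Xb.
exact: unif_cont_onD uh
  (unif_cont_onN (unif_cont_onZ _ (unif_cont_on_dilate b0 Xb uh))).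
Qed.

Lemma in_C_Mab f g : {ae mu, forall x, Mab a b f x = g x} -> in_C X f -> in_C X g.
Proof.
move=> fg [h [BUCh fh]]; exists (Mab a b h); split; first exact: BUC_on_Mab.
apply: filterS3 fg fh (ae_dilate b0 fh) => x <- fhx fhbx Xx.
by rewrite /Mab fhx ?fhbx //; exact: Xb.
Qed.

Lemma in_C_neumann f g : Linfty f -> {ae mu, forall x, Mab a b f x = g x} ->
  in_C X g -> in_C X f.
Proof.
move=> [_ fbd] fg [h [[[M hM] uh] gh]]; exists (neumann h); split.
  exact: BUC_on_neumann hM uh.
exact: neumann_ae_eq fbd fg gh.
Qed.

Lemma in_C_MabP f g : Linfty f -> {ae mu, forall x, Mab a b f x = g x} ->
  in_C X f <-> in_C X g.
Proof. by move=> Lf fg; split; [exact: in_C_Mab | exact: in_C_neumann]. Qed.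

End neumann_series.

Theorem corollary3p7 (R : realType) (a b : R) (f g : R -> R) :
  b != 0 -> `|a| < 1 -> Linfty g -> Linfty f ->
  {ae (@lebesgue_measure R), forall x, Mab a b f x = g x} ->
  [/\ (0 < b -> (in_C `[0, +oo[ f <-> in_C `[0, +oo[ g)),
      (1 <= b -> (in_C `[1, +oo[ f <-> in_C `[1, +oo[ g)) &
      (0 < b <= 1 -> (in_C `[0, 1] f <-> in_C `[0, 1] g))].
Proof.
move=> _ a1 _ Lf fg; split.
- move=> b0; refine (in_C_MabP a1 b0 _ Lf fg) => x /=.
  by rewrite !in_itv /= !andbT; exact: mulr_ge0 (ltW b0).
- move=> b1; have b0 : 0 < b by exact: lt_le_trans b1.
  refine (in_C_MabP a1 b0 _ Lf fg) => x /=.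
  by rewrite !in_itv /= !andbT; exact: mulr_ege1.
- move=> /andP[b0 b1]; refine (in_C_MabP a1 b0 _ Lf fg) => x /=.
  rewrite !in_itv /= => /andP[x0 x1].
  by rewrite mulr_ge0 ?(ltW b0) // mulr_ile1 // ltW.
Qed.
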